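(* For any two mm-spaces $X$ and $Y$, \[ d_{\mathrm{conc}}(X,Y)=\inf_{\pi\in\Pi(m_X,m_Y)} d_{\mathrm{conc}}^{\pi}(X,Y). \]
   Context: An mm-space is a complete separable metric space $(X,d_X)$ with a Borel probability measure $m_X$. $\Pi(m_X,m_Y)$: Borel probability measures on $X\times Y$ with marginals $m_X,m_Y$. $\mathcal{L}ip_1(X)$ is the set of 1-Lipschitz functions $X\to\mathbb R$. For a measure space $(Z,\mu)$ and measurable $f,g:Z\to\mathbb R$, $d_{\mathrm{KF}}^\mu(f,g):=\inf\{\varepsilon\ge0:\mu(\{|f-g|>\varepsilon\})\le\varepsilon\}$; $d_{\mathrm H}^{d_{\mathrm{KF}}^\mu}$ is the associated Hausdorff distance between sets of functions. $F^*G:=G\circ F$. $d_{\mathrm{conc}}^{\pi}(X,Y):=d_{\mathrm H}^{d_{\mathrm{KF}}^\pi}(\mathrm{pr}_1^*\mathcal{L}ip_1(X),\mathrm{pr}_2^*\mathcal{L}ip_1(Y))$. $I=[0,1)$ with Lebesgue measure $\mathcal L^1$; a parameter of $X$ is a Borel $\varphi:I\to X$ with $\varphi_*\mathcal L^1=m_X$. $d_{\mathrm{conc}}(X,Y):=\inf_{\varphi,\psi}d_{\mathrm H}^{d_{\mathrm{KF}}^{\mathcal L^1}}(\varphi^*\mathcal{L}ip_1(X),\psi^*\mathcal{L}ip_1(Y))$ over parameters $\varphi,\psi$ of $X,Y$. *)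

From HB Require Import structures.
From mathcomp Require Import all_boot all_order all_algebra.
From mathcomp Require Import all_classical all_reals all_analysis.
Set Implicit Arguments. Unset Strict Implicit. Unset Printing Implicit Defensive.
Import Order.TTheory GRing.Theory Num.Theory.
Local Open Scope classical_set_scope.
Local Open Scope ring_scope.

Section MetricDefs.
Context {R : realType} {T : Type} (dist : T -> T -> R).

Definition is_metric : Prop :=
  [/\ (forall x y, 0 <= dist x y),
      (forall x y, dist x y = 0 <-> x = y),
      (forall x y, dist x y = dist y x) &
      (forall x y z, dist x z <= dist x y + dist y z)].

Definition metric_open (A : set T) : Prop :=
  forall x, A x -> exists2 e : R, 0 < e & [set y | dist x y < e] `<=` A.

Definition metric_complete : Prop :=
  forall u : nat -> T,
    (forall e : R, 0 < e -> exists N : nat, forall m n : nat,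
        (N <= m)%N -> (N <= n)%N -> dist (u m) (u n) < e) ->
    exists x : T, forall e : R, 0 < e -> exists N : nat, forall n : nat,
        (N <= n)%N -> dist (u n) x < e.

(* separable: a countable dense subset (indexed by nat; the spaces below
   carry a probability measure, hence are nonempty) *)
Definition metric_separable : Prop :=
  exists D : nat -> T, forall x e, 0 < e -> exists n, dist (D n) x < e.

Definition Lip1 : set (T -> R) :=
  [set f | forall x y, `|f x - f y| <= dist x y].

End MetricDefs.

Definition mm_space {R : realType} {d : measure_display} {X : measurableType d}
    (dist : X -> X -> R) : Prop :=
  [/\ is_metric dist, metric_complete dist, metric_separable dist &
      (@measurable d X) = <<s [set A | metric_open dist A] >>].

Section KyFan.
Context {R : realType} {Z : Type}.

Definition dKF (mu : set Z -> \bar R) (f g : Z -> R) : \bar R :=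
  ereal_inf [set e%:E | e in
    [set e : R | 0 <= e /\ (mu [set z | (e < `|f z - g z|)%R] <= e%:E)%E]].

Definition dH_KF (mu : set Z -> \bar R) (A B : set (Z -> R)) : \bar R :=
  Order.max
    (ereal_sup [set ereal_inf [set dKF mu f g | g in B] | f in A])
    (ereal_sup [set ereal_inf [set dKF mu f g | f in A] | g in B]).

Definition pullback {W : Type} (F : Z -> W) (S : set (W -> R)) : set (Z -> R) :=
  [set G \o F | G in S].

End KyFan.

Definition LI {R : realType} (A : set R) : \bar R :=
  @lebesgue_measure R (A `&` `[0%R, 1%R[).

Definition is_parameter {R : realType} {d : measure_display}
    {X : measurableType d} (mX : probability X R) (phi : R -> X) : Prop :=
  measurable_fun (`[0%R, 1%R[ : set (measurableTypeR R)) phi /\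
  (forall A : set X, measurable A -> LI (phi @^-1` A) = mX A).

Definition dconc {R : realType} {dX dY : measure_display}
    {X : measurableType dX} {Y : measurableType dY}
    (distX : X -> X -> R) (distY : Y -> Y -> R)
    (mX : probability X R) (mY : probability Y R) : \bar R :=
  ereal_inf [set r | exists phi psi, [/\ is_parameter mX phi,
      is_parameter mY psi &
      r = dH_KF LI (pullback phi (Lip1 distX)) (pullback psi (Lip1 distY))]].

Definition is_coupling {R : realType} {dX dY : measure_display}
    {X : measurableType dX} {Y : measurableType dY}
    (mX : probability X R) (mY : probability Y R)
    (P : probability (X * Y)%type R) : Prop :=
  (forall A : set X, measurable A -> P (A `*` setT) = mX A) /\
  (forall B : set Y, measurable B -> P (setT `*` B) = mY B).

Definition dconc_pi {R : realType} {dX dY : measure_display}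
    {X : measurableType dX} {Y : measurableType dY}
    (distX : X -> X -> R) (distY : Y -> Y -> R)
    (P : probability (X * Y)%type R) : \bar R :=
  dH_KF P (pullback fst (Lip1 distX)) (pullback snd (Lip1 distY)).

From HB Require Import structures.
From mathcomp Require Import all_boot all_order all_algebra.
From mathcomp Require Import all_classical all_reals all_analysis.
From mathcomp Require Import measurable_realfun lra ring.
Set Implicit Arguments. Unset Strict Implicit. Unset Printing Implicit Defensive.
Import Order.TTheory GRing.Theory Num.Theory.
Local Open Scope classical_set_scope.

(* Two parameters [phi], [psi] push the Lebesgue measure on [0,1[ forward to
   a coupling of [mX] and [mY] under which every level set
   [|G1 x - G2 y| > e] has the same measure as its preimage in [0,1[, so
   [dconc_pi] of this coupling is the value attached to [(phi, psi)].
   Conversely, [X * Y] with the sum metric is again an mm-space, so every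
   coupling [P] has a parameter [Phi]; its components are parameters of [mX]
   and [mY] and give back [dconc_pi P].  Hence both infima are taken over the
   same set of values.  Parameters are built by coding points of [0,1[ and of
   the space through nested countable partitions with matching masses. *)

(* A code [s] lists the digits of a path in an infinitely branching tree from
   the node back to the root.  The children [k :: s] of [s] cut the interval
   [[itv_left s, itv_left s + p s[] into consecutive pieces of lengths
   [p (k :: s)], which exhaust it. *)
Section interval_coding.
Local Open Scope ring_scope.
Context {R : realType} (p : seq nat -> R).
Hypotheses (p_nil : p [::] = 1) (p_ge0 : forall s, 0 <= p s)
  (p_children_le : forall s k, \sum_(j < k) p ((j : nat) :: s) <= p s)
  (p_children_approx : forall s u, u < p s ->
     exists k, u < \sum_(j < k) p ((j : nat) :: s)).

Let children_mass s k := \sum_(j < k) p ((j : nat) :: s).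

Let children_mass_ge0 s k : 0 <= children_mass s k.
Proof. exact: sumr_ge0. Qed.

Let children_massS s k : children_mass s k.+1 = children_mass s k + p (k :: s).
Proof. by rewrite /children_mass big_ord_recr. Qed.

Let le_children_mass s k m : (k <= m)%N -> children_mass s k <= children_mass s m.
Proof.
elim: m => [|m IH]; first by rewrite leqn0 => /eqP ->.
rewrite leq_eqVlt => /orP[/eqP -> //|]; rewrite ltnS => /IH km.
by apply: (le_trans km); rewrite children_massS lerDl.
Qed.

Fixpoint itv_left (s : seq nat) : R :=
  if s is k :: s' then itv_left s' + children_mass s' k else 0.

Lemma itv_left_bounds s : 0 <= itv_left s /\ itv_left s + p s <= 1.
Proof.
elim: s => [|k s [IH1 IH2]] /=; first by rewrite p_nil add0r.
split; first by rewrite addr_ge0.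
rewrite -addrA -children_massS; apply: le_trans IH2.
by rewrite lerD2l; exact: p_children_le.
Qed.

Lemma itv_left_cons k s :
  itv_left s <= itv_left (k :: s) /\
  itv_left (k :: s) + p (k :: s) <= itv_left s + p s.
Proof.
split; first by rewrite /= lerDl.
by rewrite /= -addrA -children_massS lerD2l; exact: p_children_le.
Qed.

Definition itv_digit (s : seq nat) (t : R) : nat :=
  if pselect (exists k, t - itv_left s < children_mass s k.+1) is left h
  then ex_minn h else 0%N.

Lemma itv_digitP s t k : itv_left s <= t < itv_left s + p s ->
  itv_digit s t = k <->
  itv_left (k :: s) <= t < itv_left (k :: s) + p (k :: s).
Proof.
move=> /andP[ts st] /=; rewrite -addrA -children_massS.
have ex : exists k, t - itv_left s < children_mass s k.+1.
  have [|k0 hk] := @p_children_approx s (t - itv_left s).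
    by rewrite ltrBlDl.
  by exists k0; apply: (lt_le_trans hk); exact: le_children_mass.
rewrite /itv_digit; case: pselect => [h|//]; case: ex_minnP => m hm hmin.
split.
- move=> <-; rewrite -ltrBlDl hm andbT.
  case: m hm hmin => [|m] hm hmin; first by rewrite /children_mass big_ord0 addr0.
  by rewrite -lerBrDl leNgt; apply/negP => /hmin; rewrite ltnn.
- move=> /andP[k1 k2]; apply/eqP; rewrite eqn_leq; apply/andP; split.
    by apply: hmin; rewrite ltrBlDl.
  rewrite leqNgt; apply/negP => mk.
  by have := le_children_mass s mk; move: hm; rewrite ltrBlDl; lra.
Qed.

Fixpoint itv_code (n : nat) (t : R) : seq nat :=
  if n is n'.+1 then itv_digit (itv_code n' t) t :: itv_code n' t else [::].

Lemma size_itv_code n t : size (itv_code n t) = n.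
Proof. by elim: n => //= n ->. Qed.

Lemma itv_codeP n t s : 0 <= t < 1 -> size s = n ->
  itv_code n t = s <-> itv_left s <= t < itv_left s + p s.
Proof.
move=> /andP[t0 t1]; elim: n s => [|n IH] [|k s] //.
  by move=> _; rewrite p_nil add0r t0 t1.
case=> /IH {}IH; have [lk kr] := itv_left_cons k s; split.
- by move=> /= [hd hp]; apply/(itv_digitP k (IH.1 hp)); rewrite -hp hd.
- move=> hk; have hs : itv_left s <= t < itv_left s + p s.
    by move: hk => /andP[? ?]; apply/andP; split; lra.
  by rewrite /= (IH.2 hs); congr (_ :: _); apply/(itv_digitP k hs).
Qed.

End interval_coding.

Section metric_facts.
Local Open Scope ring_scope.
Context {R : realType} {T : Type} (dist : T -> T -> R).
Hypothesis dist_metric : is_metric dist.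

Lemma metric_ge0 x y : 0 <= dist x y.
Proof. by case: dist_metric. Qed.

Lemma metric_sym x y : dist x y = dist y x.
Proof. by case: dist_metric. Qed.

Lemma metric_triangle x y z : dist x z <= dist x y + dist y z.
Proof. by case: dist_metric. Qed.

Definition mball (c : T) (r : R) : set T := [set y | dist c y < r].

Lemma mball_open c r : metric_open dist (mball c r).
Proof.
move=> y cy; exists (r - dist c y); first by rewrite subr_gt0.
by move=> w /= yw; apply: (le_lt_trans (metric_triangle c y w)); lra.
Qed.

Lemma metric_openI : setI_closed [set A | metric_open dist A].
Proof.
move=> A B oA oB x [Ax Bx].
have [e1 e10 h1] := oA x Ax; have [e2 e20 h2] := oB x Bx.
exists (Num.min e1 e2); first by rewrite lt_min e10 e20.
by move=> y /=; rewrite lt_min => /andP[y1 y2]; split; [exact: h1|exact: h2].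
Qed.

End metric_facts.

Lemma metric_openT {R : realType} {T : Type} (dist : T -> T -> R) :
  metric_open dist setT.
Proof. by move=> x _; exists 1%R => //; rewrite ltr01. Qed.

Section radius.
Local Open Scope ring_scope.
Context {R : realType}.

Definition radius (n : nat) : R := n.+1%:R^-1.

Lemma radius_gt0 n : 0 < radius n.
Proof. by rewrite /radius invr_gt0 ltr0n. Qed.

Lemma radius_small e : 0 < e -> exists n, radius n < e.
Proof. by move=> e0; have [n] := ltr_add_invr e0; rewrite add0r; exists n. Qed.

Lemma radius_le m n : (m <= n)%N -> radius n <= radius m.
Proof. by move=> mn; rewrite /radius lef_pV2 ?posrE ?ltr0n // ler_nat. Qed.

End radius.

Section cells.
Local Open Scope ring_scope.
Context {R : realType} {T : Type} (dist : T -> T -> R) (D : nat -> T).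
Hypotheses (dist_metric : is_metric dist)
  (D_dense : forall x e, 0 < e -> exists n, dist (D n) x < e).

Definition ball_index (n : nat) (z : T) : nat :=
  if pselect (exists k, dist (D k) z < radius n) is left h
  then ex_minn h else 0%N.

Lemma ball_indexP n z k : ball_index n z = k <->
  dist (D k) z < radius n /\ forall j, (j < k)%N -> radius n <= dist (D j) z.
Proof.
rewrite /ball_index; case: pselect => [h|h]; last first.
  by exfalso; apply: h; exact: D_dense (radius_gt0 n).
case: ex_minnP => m hm hmin; split.
- move=> <-; split => // j jm; rewrite leNgt; apply/negP => /hmin.
  by rewrite leqNgt jm.
- move=> [h1 h2]; apply/eqP; rewrite eqn_leq hmin //=.
  by rewrite leqNgt; apply/negP => /h2; rewrite leNgt hm.
Qed.

Fixpoint cell_code (n : nat) (z : T) : seq nat :=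
  if n is n'.+1 then ball_index n' z :: cell_code n' z else [::].

Lemma size_cell_code n z : size (cell_code n z) = n.
Proof. by elim: n => //= n ->. Qed.

Definition cell (s : seq nat) : set T := [set z | cell_code (size s) z = s].

Lemma cell_code_cell n z : cell (cell_code n z) z.
Proof. by rewrite /cell /= size_cell_code. Qed.

Lemma cell_nil : cell [::] = setT.
Proof. by apply/seteqP; split. Qed.

Lemma cell_cons k s :
  cell (k :: s) = cell s `&` [set z | ball_index (size s) z = k].
Proof. by apply/seteqP; split => z; rewrite /cell /= => -[-> ->]. Qed.

Lemma cell_cons_sub k s : cell (k :: s) `<=` cell s.
Proof. by rewrite cell_cons => z []. Qed.

Lemma cell_bigcup s : cell s = \bigcup_k cell (k :: s).
Proof.
apply/seteqP; split => [z sz|z [k _]]; last exact: cell_cons_sub.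
by exists (ball_index (size s) z) => //; rewrite cell_cons.
Qed.

Lemma cell_trivIset s : trivIset setT (fun k => cell (k :: s)).
Proof.
apply/trivIsetP => i j _ _ ij; apply/seteqP; split => // z.
by rewrite !cell_cons => -[[_ hi] [_ hj]]; move/eqP: ij; apply; rewrite -hi -hj.
Qed.

Lemma cell_diam k s z w : cell (k :: s) z -> cell (k :: s) w ->
  dist z w < 2 * radius (size s).
Proof.
rewrite cell_cons => -[_ /ball_indexP [kz _]] [_ /ball_indexP [kw _]].
apply: (le_lt_trans (metric_triangle dist_metric z (D k) w)).
by rewrite (metric_sym dist_metric z); lra.
Qed.

End cells.

Section borel.
Local Open Scope ring_scope.
Context {R : realType} {d : measure_display} {T : measurableType d}
  (dist : T -> T -> R) (D : nat -> T).
Hypotheses (dist_metric : is_metric dist)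
  (D_dense : forall x e, 0 < e -> exists n, dist (D n) x < e)
  (dist_borel : @measurable d T = <<s [set A | metric_open dist A] >>).

Lemma open_measurable A : metric_open dist A -> measurable A.
Proof. by rewrite dist_borel; exact: sub_sigma_algebra. Qed.

Lemma measurable_mball c r : measurable (mball dist c r).
Proof. exact/open_measurable/mball_open. Qed.

Lemma measurable_ball_index n k :
  measurable [set z | ball_index dist D n z = k].
Proof.
pose far k := [set z | forall j, (j < k)%N -> radius n <= dist (D j) z].
have farS j : far j.+1 = far j `&` ~` mball dist (D j) (radius n).
  apply/seteqP; split => z /=.
    move=> h; split; first by move=> i ij; apply: h; rewrite ltnS ltnW.
    by apply/negP; rewrite -leNgt; apply: h.
  move=> [h1 /negP h2] i; rewrite ltnS leq_eqVlt => /orP[/eqP ->|/h1 //].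
  by rewrite leNgt.
have mfar j : measurable (far j).
  elim: j => [|j IH]; last by rewrite farS; apply: measurableI => //;
    exact/measurableC/measurable_mball.
  by rewrite (_ : far 0%N = setT) //; apply/seteqP; split.
have -> : [set z | ball_index dist D n z = k] =
    mball dist (D k) (radius n) `&` far k.
  by apply/seteqP; split => z /(ball_indexP D_dense).
exact/measurableI/mfar/measurable_mball.
Qed.

Lemma measurable_cell s : measurable (cell dist D s).
Proof.
elim: s => [|k s IH]; first by rewrite cell_nil.
by rewrite cell_cons; exact/measurableI/measurable_ball_index.
Qed.

End borel.

Section countable_law.
Local Open Scope ereal_scope.
Context {R : realType} {I : countType}.

(* Reindexes [A] by [nat] through [pickle], so that countable additivity
   applies. *)
Let slice (A : set I) (n : nat) : set I := [set i | A i /\ pickle i = n].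

Let slice_cases A n : slice A n = set0 \/ exists i, slice A n = [set i].
Proof.
have [[i [Ai <-]]|h] := pselect (exists i, A i /\ pickle i = n).
  right; exists i; apply/seteqP; split => [j /= [_ ji]|j -> //].
  by apply: (pcan_inj (@pickleK I)); rewrite ji.
by left; apply/seteqP; split => // j Aj; apply: h; exists j.
Qed.

Let slice_cover A : A = \bigcup_n slice A n.
Proof. by apply/seteqP; split => [i Ai|i [n _ []//]]; exists (pickle i). Qed.

Let preimage_slice_trivIset {T : Type} (h : T -> I) A :
  trivIset setT (fun n => h @^-1` slice A n).
Proof.
apply/trivIsetP => m n _ _ mn; apply/seteqP; split => // x [[_ hm] [_ hn]].
by move/eqP: mn; apply; rewrite -hm -hn.
Qed.

Lemma measurable_preimage_countable {d} {T : measurableType d} (h : T -> I) :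
  (forall i, measurable (h @^-1` [set i])) -> forall A, measurable (h @^-1` A).
Proof.
move=> mh A; rewrite (slice_cover A) preimage_bigcup.
apply: bigcupT_measurable => n.
by case: (slice_cases A n) => [->|[i ->]]; rewrite ?preimage_set0.
Qed.

Lemma eq_law_countable {d1 d2} {T1 : measurableType d1} {T2 : measurableType d2}
    (m1 : measure T1 R) (m2 : measure T2 R)
    (f : T1 -> I) (g : T2 -> I) :
  (forall i, measurable (f @^-1` [set i])) ->
  (forall i, measurable (g @^-1` [set i])) ->
  (forall i, m1 (f @^-1` [set i]) = m2 (g @^-1` [set i])) ->
  forall A, m1 (f @^-1` A) = m2 (g @^-1` A).
Proof.
move=> mf mg fg A; rewrite (slice_cover A) !preimage_bigcup.
have mpf n := measurable_preimage_countable mf (slice A n).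
have mpg n := measurable_preimage_countable mg (slice A n).
rewrite !measure_semi_bigcup //; last 2 first.
- by rewrite -preimage_bigcup; exact: measurable_preimage_countable.
- by rewrite -preimage_bigcup; exact: measurable_preimage_countable.
apply: eq_eseriesr => n _.
by case: (slice_cases A n) => [->|[i ->]]; rewrite ?preimage_set0 ?measure0.
Qed.

End countable_law.

Lemma measure_liminf_le {d} {T : measurableType d} {R : realType}
    (mu : measure T R) (F : nat -> set T) (c : \bar R) :
  (forall n, measurable (F n)) -> (forall n, (mu (F n) <= c)%E) ->
  (mu (\bigcup_m \bigcap_k F (k + m)%N) <= c)%E.
Proof.
move=> mF Fc; set G := fun m => \bigcap_k F (k + m)%N.
have mG m : measurable (G m) by exact: bigcapT_measurable.
have ndG : nondecreasing_seq G.
  move=> m n mn; apply/subsetPset => x Gx k _.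
  by rewrite -(subnK mn) addnA; exact: Gx.
have Gc m : (mu (G m) <= c)%E.
  apply: le_trans (Fc m); apply: le_measure; rewrite ?inE //.
  by move=> x /(_ 0%N Logic.I).
have cvgG := nondecreasing_cvg_mu (mu := mu) mG (bigcupT_measurable _ mG) ndG.
rewrite -(cvg_lim _ cvgG) //; apply: lime_le; first exact: cvgP cvgG.
exact: nearW.
Qed.

(* [LI] with its measure structure: [lebesgue01 A] is convertible to [LI A]. *)
Definition lebesgue01 {R : realType} :=
  mrestr (@lebesgue_measure R) (measurable_itv `[0%R, 1%R[%R).

Section law01.
Local Open Scope ereal_scope.
Context {R : realType} {d : measure_display} {T : measurableType d}
  (f : R -> T) (mf : measurable_fun (`[0%R, 1%R[ : set R) f).

(* The measurability proof is an argument only so that the measure instance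
   on [law01 mf] can be found. *)
Definition law01 of measurable_fun (`[0%R, 1%R[ : set R) f : set T -> \bar R :=
  fun A => LI (f @^-1` A).

Let law01_0 : law01 mf set0 = 0.
Proof. by rewrite /law01 preimage_set0 /LI set0I measure0. Qed.

Let law01_ge0 A : 0 <= law01 mf A.
Proof. exact: measure_ge0. Qed.

Let law01_sigma_additive : semi_sigma_additive (law01 mf).
Proof.
move=> F mF tF mUF; rewrite /law01 /LI preimage_bigcup setI_bigcupl.
apply: (@measure_semi_sigma_additive _ _ _ lebesgue_measure).
- by move=> n; rewrite setIC; exact: mf (measurable_itv _) _ (mF n).
- apply/trivIsetP => i j _ _ ij; rewrite setIACA setIid -preimage_setI.
  move/trivIsetP: tF => /(_ i j Logic.I Logic.I ij) ->.
  by rewrite preimage_set0 set0I.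
- by rewrite -setI_bigcupl -preimage_bigcup setIC; exact: mf.
Qed.

HB.instance Definition _ := isMeasure.Build _ _ _ (law01 mf)
  law01_0 law01_ge0 law01_sigma_additive.

Let law01_setT : law01 mf setT = 1.
Proof.
rewrite /law01 /LI preimage_setT setTI lebesgue_measure_itv /= lte_fin ltr01.
by rewrite oppr0 adde0.
Qed.

HB.instance Definition _ :=
  Measure_isProbability.Build _ _ _ (law01 mf) law01_setT.

End law01.

Section clamp01.
Local Open Scope ring_scope.
Context {R : realType}.

Definition clamp01 (t : R) : R := if 0 <= t < 1 then t else 0.

Lemma clamp01_itv t : 0 <= clamp01 t < 1.
Proof. by rewrite /clamp01; case: ifP => // _; rewrite lexx ltr01. Qed.

Lemma clamp01_id t : 0 <= t < 1 -> clamp01 t = t.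
Proof. by rewrite /clamp01 => ->. Qed.

Lemma measurable_clamp01 : measurable_fun setT clamp01.
Proof.
apply: measurable_fun_ifT => //; apply: measurable_and.
  exact: measurable_fun_ler.
exact: measurable_fun_ltr.
Qed.

End clamp01.

Section deep_points.
Local Open Scope ring_scope.
Context {R : realType} {T : Type} (dist : T -> T -> R).
Hypothesis dist_metric : is_metric dist.

Definition deep (G : set T) (n : nat) : set T :=
  [set z | mball dist z (4 * radius n) `<=` G].

Lemma deep_mem G n x y : dist y x <= 2 * radius n -> deep G n y -> G x.
Proof.
move=> yx; apply; apply: le_lt_trans yx _.
by rewrite ltr_pM2r ?radius_gt0 // ltr_nat.
Qed.

Lemma deep_eventually G x (u : nat -> T) : metric_open dist G -> G x ->
  (forall n, dist (u n) x <= 2 * radius n) ->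
  exists m, forall k, deep G (k + m) (u (k + m)%N).
Proof.
move=> oG /oG [r r0 xrG] ux.
have [m mr] := radius_small (divr_gt0 r0 (ltr0n _ 6)).
exists m => k y /= uy; apply: xrG => /=.
apply: (le_lt_trans (metric_triangle dist_metric _ (u (k + m)%N) _)).
have := ux (k + m)%N; have := radius_le (R := R) (leq_addl k m).
by rewrite (metric_sym dist_metric x); move: uy; rewrite /mball /=; lra.
Qed.

End deep_points.

(* The parameter: [t] in [0,1[ determines a decreasing sequence of nonempty
   cells, through the intervals [[itv_left s, itv_left s + P (cell s)[]
   that contain it; [param t] is the limit of points chosen in these cells.
   Its law is [P] because each [approx n] has exactly the law of the
   discretization [quantize n] of the identity. *)
Section parameter.
Local Open Scope ring_scope.
Context {R : realType} {d : measure_display} {Z : measurableType d}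
  (dist : Z -> Z -> R) (D : nat -> Z) (P : probability Z R).
Hypotheses (dist_metric : is_metric dist)
  (D_dense : forall x e, 0 < e -> exists n, dist (D n) x < e)
  (dist_borel : @measurable d Z = <<s [set A | metric_open dist A] >>)
  (dist_complete : metric_complete dist).

Local Notation cell := (cell dist D).
Local Notation cell_code := (cell_code dist D).

Let mcell s : measurable (cell s) :=
  measurable_cell dist_metric D_dense dist_borel s.

Definition cell_mass s : R := fine (P (cell s)).

Let cell_massE s : ((cell_mass s)%:E = P (cell s))%E.
Proof. by rewrite /cell_mass fineK // fin_num_measure. Qed.

Let cell_mass_nil : cell_mass [::] = 1.
Proof. by rewrite /cell_mass cell_nil probability_setT. Qed.

Let cell_mass_ge0 s : 0 <= cell_mass s.
Proof. by rewrite /cell_mass fine_ge0. Qed.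

Let P_cell_series s : (P (cell s) = \sum_(k <oo) P (cell (k :: s)))%E.
Proof.
rewrite {1}(cell_bigcup dist D s) measure_semi_bigcup //.
  exact: cell_trivIset.
by rewrite -cell_bigcup.
Qed.

Let sum_cell_massE s k : ((\sum_(j < k) cell_mass ((j : nat) :: s))%:E =
  \sum_(0 <= j < k) P (cell (j :: s)))%E.
Proof. by rewrite -sumEFin big_mkord; apply: eq_bigr => j _. Qed.

Let cell_mass_children_le s k :
  \sum_(j < k) cell_mass ((j : nat) :: s) <= cell_mass s.
Proof.
by rewrite -lee_fin sum_cell_massE cell_massE P_cell_series nneseries_lim_ge.
Qed.

Let cell_mass_children_approx s u : u < cell_mass s ->
  exists k, u < \sum_(j < k) cell_mass ((j : nat) :: s).
Proof.
move=> us; apply: contrapT => hn.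
suff : (P (cell s) <= u%:E)%E by rewrite -cell_massE lee_fin leNgt us.
rewrite P_cell_series; apply: lime_le.
  exact: is_cvg_nneseries.
apply: nearW => k; rewrite -sum_cell_massE lee_fin leNgt; apply/negP => uk.
by apply: hn; exists k.
Qed.

Definition code01 (n : nat) (t : R) : seq nat := itv_code cell_mass n (clamp01 t).

Let size_code01 n t : size (code01 n t) = n.
Proof. exact: size_itv_code. Qed.

Let code01P n t s : size s = n -> code01 n t = s <->
  itv_left cell_mass s <= clamp01 t < itv_left cell_mass s + cell_mass s.
Proof.
exact: (itv_codeP cell_mass_nil cell_mass_ge0 cell_mass_children_le
  cell_mass_children_approx (clamp01_itv t)).
Qed.

Let code01_clamp01 n t : code01 n (clamp01 t) = code01 n t.
Proof. by rewrite /code01 clamp01_id // clamp01_itv. Qed.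

Let code01_itvI n s : size s = n ->
  code01 n @^-1` [set s] `&` `[0%R, 1%R[%classic =
  `[itv_left cell_mass s, itv_left cell_mass s + cell_mass s[%classic.
Proof.
move=> sn; apply/seteqP; split => t /=; rewrite !in_itv /=.
  by move=> [+ t01]; rewrite (code01P _ sn) clamp01_id.
have [s0 s1] :=
  itv_left_bounds cell_mass_nil cell_mass_ge0 cell_mass_children_le s.
move=> st; have t01 : 0 <= t < 1.
  by move: st => /andP[? ?]; apply/andP; split; lra.
by rewrite (code01P _ sn) clamp01_id.
Qed.

Let code01_preimage_notin n s : size s != n -> code01 n @^-1` [set s] = set0.
Proof.
move=> sn; apply/seteqP; split => t //= ts.
by move: sn; rewrite -ts size_code01 eqxx.
Qed.

Let measurable_code01 n s : measurable (code01 n @^-1` [set s]).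
Proof.
have [sn|sn] := eqVneq (size s) n; last by rewrite code01_preimage_notin.
have -> : code01 n @^-1` [set s] =
    clamp01 @^-1` (code01 n @^-1` [set s] `&` `[0%R, 1%R[%classic).
  apply/seteqP; split => t /=; rewrite code01_clamp01 ?in_itv /= ?clamp01_itv //.
  by case.
rewrite code01_itvI // -[X in measurable X]setTI.
by apply: measurable_clamp01 => //; exact: measurable_itv.
Qed.

Let cell_code_preimage_notin n s :
  size s != n -> cell_code n @^-1` [set s] = set0.
Proof.
move=> sn; apply/seteqP; split => z //= zs.
by move: sn; rewrite -zs size_cell_code eqxx.
Qed.

Let measurable_cell_code n s : measurable (cell_code n @^-1` [set s]).
Proof.
have [<-|sn] := eqVneq (size s) n; first exact: mcell.
by rewrite cell_code_preimage_notin.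
Qed.

Let code01_law_point n s :
  lebesgue01 (code01 n @^-1` [set s]) = P (cell_code n @^-1` [set s]).
Proof.
have [<-|sn] := eqVneq (size s) n; last first.
  by rewrite code01_preimage_notin // cell_code_preimage_notin // !measure0.
rewrite /lebesgue01 /mrestr code01_itvI // lebesgue_measure_itv /= lte_fin ltrDl.
rewrite -[X in P X]/(cell s) -cell_massE.
case: ltgtP (cell_mass_ge0 s) => // [_ _|<- _ //].
by rewrite -EFinD addrAC subrr add0r.
Qed.

Let code01_law n A : lebesgue01 (code01 n @^-1` A) = P (cell_code n @^-1` A).
Proof.
exact: (@eq_law_countable _ _ _ _ _ _ lebesgue01 P _ _ (measurable_code01 n)
  (measurable_cell_code n) (code01_law_point n)).
Qed.

Definition cell_point (s : seq nat) : Z := xget point (cell s).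
Definition approx (n : nat) (t : R) : Z := cell_point (code01 n.+1 t).
Definition quantize (n : nat) (z : Z) : Z := cell_point (cell_code n.+1 z).

Let cell_point_cell s : cell s !=set0 -> cell s (cell_point s).
Proof. by move=> [z sz]; apply: xgetPex; exists z. Qed.

Let cell_code01_neq0 n t : cell (code01 n t) !=set0.
Proof.
apply/set0P/eqP => c0.
have /andP[] := (code01P t (size_code01 n t)).1 erefl.
have -> : cell_mass (code01 n t) = 0 by rewrite /cell_mass c0 measure0.
by rewrite addr0 => /le_lt_trans/[apply]; rewrite ltxx.
Qed.

Let cell_code01_le n m t : (n <= m)%N -> cell (code01 m t) `<=` cell (code01 n t).
Proof.
elim: m => [|m IH]; first by rewrite leqn0 => /eqP ->.
rewrite leq_eqVlt => /orP[/eqP -> //|]; rewrite ltnS => /IH; apply: subset_trans.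
exact: cell_cons_sub.
Qed.

Let approx_cell n m t : (n <= m)%N -> cell (code01 n.+1 t) (approx m t).
Proof.
move=> nm; apply: (@cell_code01_le n.+1 m.+1) => //.
exact/cell_point_cell/cell_code01_neq0.
Qed.

Let approx_close n m t :
  (n <= m)%N -> dist (approx n t) (approx m t) < 2 * radius n.
Proof.
move=> nm; have := cell_diam dist_metric D_dense
  (approx_cell t (leqnn n)) (approx_cell t nm).
by rewrite size_itv_code.
Qed.

Let quantize_close n z : dist (quantize n z) z < 2 * radius n.
Proof.
have zc : cell (cell_code n.+1 z) z by exact: cell_code_cell.
have := cell_diam dist_metric D_dense (cell_point_cell (ex_intro _ z zc)) zc.
by rewrite size_cell_code.
Qed.

Let approx_law n A : lebesgue01 (approx n @^-1` A) = P (quantize n @^-1` A).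
Proof. exact: (code01_law n.+1 (cell_point @^-1` A)). Qed.

Let measurable_approx n A : measurable (approx n @^-1` A).
Proof.
exact: (measurable_preimage_countable (measurable_code01 n.+1)
  (cell_point @^-1` A)).
Qed.

Let measurable_quantize n A : measurable (quantize n @^-1` A).
Proof.
exact: (measurable_preimage_countable (measurable_cell_code n.+1)
  (cell_point @^-1` A)).
Qed.

Definition param (t : R) : Z := xget point [set x | forall e, 0 < e ->
  exists N, forall n, (N <= n)%N -> dist (approx n t) x < e].

Let approx_param n t : dist (approx n t) (param t) <= 2 * radius n.
Proof.
have param_lim e : 0 < e ->
    exists N, forall n, (N <= n)%N -> dist (approx n t) (param t) < e.
  move: e; apply: (@xgetPex _ point [set x | forall e, 0 < e ->
    exists N, forall n, (N <= n)%N -> dist (approx n t) x < e]).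
  apply: dist_complete => e e0.
  have [N Ne] := radius_small (divr_gt0 e0 (ltr0n _ 4)).
  exists N => m k Nm Nk.
  apply: (le_lt_trans (metric_triangle dist_metric _ (approx N t) _)).
  rewrite (metric_sym dist_metric (approx m t)).
  by have := approx_close t Nm; have := approx_close t Nk; lra.
apply/ler_addgt0Pr => e e0; have [N Ne] := param_lim e e0.
apply: (le_trans (metric_triangle dist_metric _ (approx (maxn n N) t) _)).
by have := approx_close t (leq_maxl n N); have := Ne _ (leq_maxr n N); lra.
Qed.

Let approx_deep_sub G n : approx n @^-1` deep dist G n `<=` param @^-1` G.
Proof. by move=> t; apply: deep_mem (approx_param n t). Qed.

Let quantize_deep_sub G n : quantize n @^-1` deep dist G n `<=` G.
Proof. by move=> z; apply: deep_mem (ltW (quantize_close n z)). Qed.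

Let preimage_param G : metric_open dist G ->
  param @^-1` G = \bigcup_m \bigcap_k approx (k + m) @^-1` deep dist G (k + m).
Proof.
move=> oG; apply/seteqP; split => [t Gt|t [m _ /(_ 0%N Logic.I)]]; last first.
  exact: approx_deep_sub.
have [m deep_m] := deep_eventually dist_metric oG Gt (approx_param ^~ t).
by exists m => // k _; exact: deep_m.
Qed.

Let open_sub_quantize G : metric_open dist G ->
  G `<=` \bigcup_m \bigcap_k quantize (k + m) @^-1` deep dist G (k + m).
Proof.
move=> oG z Gz.
have [m deep_m] :=
  deep_eventually dist_metric oG Gz (fun n => ltW (quantize_close n z)).
by exists m => // k _; exact: deep_m.
Qed.

Lemma measurable_param : measurable_fun setT param.
Proof.
apply: (measurability _ dist_borel) => _ [G oG <-].
rewrite setTI preimage_param //; apply: bigcupT_measurable => m.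
by apply: bigcapT_measurable => k; exact: measurable_approx.
Qed.

Lemma param_law_open G : metric_open dist G ->
  lebesgue01 (param @^-1` G) = P G.
Proof.
move=> oG; have mG := open_measurable dist_borel oG.
have mparam : measurable (param @^-1` G).
  by rewrite -[X in measurable X]setTI; exact: measurable_param.
apply/eqP; rewrite eq_le; apply/andP; split.
- rewrite preimage_param //.
  apply: (@measure_liminf_le _ _ _ lebesgue01
    (fun n => approx n @^-1` deep dist G n)) => n.
    exact: measurable_approx.
  change (lebesgue01 (approx n @^-1` deep dist G n) <= P G)%E.
  by rewrite approx_law; apply: le_measure; rewrite ?inE.
- apply: (le_trans (le_measure _ _ _ (open_sub_quantize oG))); rewrite ?inE //.
    by apply: bigcupT_measurable => m; apply: bigcapT_measurable.
  apply: (@measure_liminf_le _ _ _ P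
    (fun n => quantize n @^-1` deep dist G n)) => n.
    exact: measurable_quantize.
  rewrite /= -approx_law; apply: le_measure; rewrite ?inE //.
  exact: measurable_approx.
Qed.

Lemma param_is_parameter : is_parameter P param.
Proof.
have mparam : measurable_fun (`[0%R, 1%R[ : set R) param.
  exact: measurable_funS measurableT (subsetT _) measurable_param.
split => // A mA.
have := measure_unique [set A | metric_open dist A] (fun _ => setT) dist_borel
  (@metric_openI _ _ dist) (fun _ => metric_openT dist) (bigcup_const _ _)
  (law01 mparam) P.
apply => //.
- by move=> G oG; exact: param_law_open.
- by move=> _ /=; rewrite (@probability_setT _ _ _ (law01 mparam)) ltry.
Qed.

End parameter.

Lemma exists_parameter {R : realType} {d : measure_display} {Z : measurableType d}
    (dist : Z -> Z -> R) (P : probability Z R) :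
  mm_space dist -> exists phi, is_parameter P phi.
Proof.
move=> [dist_metric dist_complete [D D_dense] dist_borel].
by exists (param dist D P); exact: param_is_parameter.
Qed.

Section sum_metric.
Local Open Scope ring_scope.
Context {R : realType} {X Y : Type} (distX : X -> X -> R) (distY : Y -> Y -> R).

Definition sum_dist (p q : X * Y) : R := distX p.1 q.1 + distY p.2 q.2.

Hypotheses (distX_metric : is_metric distX) (distY_metric : is_metric distY).

Let geX := metric_ge0 distX_metric.
Let geY := metric_ge0 distY_metric.

Lemma sum_dist_metric : is_metric sum_dist.
Proof.
have [_ X0 Xsym Xtri] := distX_metric; have [_ Y0 Ysym Ytri] := distY_metric.
split.
- by move=> p q; rewrite addr_ge0.
- move=> [x1 y1] [x2 y2]; rewrite /sum_dist /=; split; last first.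
    by case=> -> ->; rewrite (X0 _ _).2 // (Y0 _ _).2 // addr0.
  move=> h; have := geX x1 x2; have := geY y1 y2 => hy hx.
  have ex : distX x1 x2 = 0 by lra.
  have ey : distY y1 y2 = 0 by lra.
  by rewrite ((X0 _ _).1 ex) ((Y0 _ _).1 ey).
- by move=> p q; rewrite /sum_dist Xsym Ysym.
- move=> p q r; rewrite /sum_dist.
  by have := Xtri p.1 q.1 r.1; have := Ytri p.2 q.2 r.2; lra.
Qed.

Lemma sum_dist_complete :
  metric_complete distX -> metric_complete distY -> metric_complete sum_dist.
Proof.
move=> cX cY u u_cauchy.
have [x ux] : exists x, forall e, 0 < e ->
    exists N, forall n, (N <= n)%N -> distX (u n).1 x < e.
  apply: cX => e e0; have [N hN] := u_cauchy e e0; exists N => m n Nm Nn.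
  by have := hN m n Nm Nn; rewrite /sum_dist; have := geY (u m).2 (u n).2; lra.
have [y uy] : exists y, forall e, 0 < e ->
    exists N, forall n, (N <= n)%N -> distY (u n).2 y < e.
  apply: cY => e e0; have [N hN] := u_cauchy e e0; exists N => m n Nm Nn.
  by have := hN m n Nm Nn; rewrite /sum_dist; have := geX (u m).1 (u n).1; lra.
exists (x, y) => e e0; have e2 : 0 < e / 2 by rewrite divr_gt0.
have [N1 h1] := ux _ e2; have [N2 h2] := uy _ e2.
exists (maxn N1 N2) => n; rewrite geq_max => /andP[N1n N2n].
by rewrite /sum_dist /=; have := h1 n N1n; have := h2 n N2n; lra.
Qed.

Lemma sum_dist_separable :
  metric_separable distX -> metric_separable distY -> metric_separable sum_dist.
Proof.
move=> [DX DX_dense] [DY DY_dense].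
exists (fun n => if @unpickle (nat * nat)%type n is Some ij
  then (DX ij.1, DY ij.2) else (DX 0%N, DY 0%N)).
move=> [x y] e e0; have e2 : 0 < e / 2 by rewrite divr_gt0.
have [i hi] := DX_dense x _ e2; have [j hj] := DY_dense y _ e2.
by exists (pickle (i, j)); rewrite pickleK /sum_dist /=; lra.
Qed.

Lemma open_preimage_fst B :
  metric_open distX B -> metric_open sum_dist (fst @^-1` B).
Proof.
move=> oB z /oB [e e0 zeB]; exists e => // w zw; apply: zeB => /=.
by move: zw; rewrite /sum_dist /=; have := geY z.2 w.2; lra.
Qed.

Lemma open_preimage_snd B :
  metric_open distY B -> metric_open sum_dist (snd @^-1` B).
Proof.
move=> oB z /oB [e e0 zeB]; exists e => // w zw; apply: zeB => /=.
by move: zw; rewrite /sum_dist /=; have := geX z.1 w.1; lra.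
Qed.

Lemma open_Lip1_gap (G1 : X -> R) (G2 : Y -> R) e :
  Lip1 distX G1 -> Lip1 distY G2 ->
  metric_open sum_dist [set w | e < `|G1 w.1 - G2 w.2|].
Proof.
move=> lip1 lip2 w /= ew; exists (`|G1 w.1 - G2 w.2| - e).
  by rewrite subr_gt0.
move=> w' /=; rewrite /sum_dist => ww'.
have : `|G1 w.1 - G2 w.2| <= `|G1 w'.1 - G2 w'.2| +
    `|(G1 w.1 - G1 w'.1) - (G2 w.2 - G2 w'.2)|.
  by apply: le_trans (ler_normD _ _); rewrite le_eqVlt; apply/orP; left;
    apply/eqP; congr `|_|; ring.
have := ler_normB (G1 w.1 - G1 w'.1) (G2 w.2 - G2 w'.2).
by have := lip1 w.1 w'.1; have := lip2 w.2 w'.2; lra.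
Qed.

End sum_metric.

Lemma borel_preimage {R : realType} {T : Type} {U : pointedType}
    (distT : T -> T -> R) (distU : U -> U -> R) (f : T -> U) :
  (forall B, metric_open distU B -> metric_open distT (f @^-1` B)) ->
  forall B, <<s [set A | metric_open distU A] >> B ->
    <<s [set A | metric_open distT A] >> (f @^-1` B).
Proof.
move=> f_open B borelB; rewrite -[f @^-1` B]setTI.
have : <<s setT, preimage_set_system setT f [set A | metric_open distU A] >>
    (setT `&` f @^-1` B) by rewrite g_sigma_preimageE; exists B.
apply: smallest_sub; first exact: smallest_sigma_algebra.
by move=> _ [C oC <-]; apply: sub_sigma_algebra; rewrite setTI; exact: f_open.
Qed.

Section sum_metric_borel.
Local Open Scope ring_scope.
Context {R : realType} {dX dY : measure_display} {X : measurableType dX}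
  {Y : measurableType dY} (distX : X -> X -> R) (distY : Y -> Y -> R).
Hypotheses (hX : mm_space distX) (hY : mm_space distY).

(* Every open set of the sum metric is a countable union of products of
   balls centred at points of the dense sequences. *)
Let measurable_open_sum_dist G :
  metric_open (sum_dist distX distY) G -> measurable G.
Proof.
have [mX _ [DX DX_dense] bX] := hX; have [mY _ [DY DY_dense] bY] := hY.
move=> oG.
pose box (ijq : nat * nat * nat) : set (X * Y) :=
  mball distX (DX ijq.1.1) (radius ijq.2) `*`
  mball distY (DY ijq.1.2) (radius ijq.2).
have -> : G =
    \bigcup_ijq (if pselect (box ijq `<=` G) is left _ then box ijq else set0).
  apply/seteqP; split => [z Gz|z [ijq _]]; last by case: pselect => // boxG /boxG.
  have [r r0 zrG] := oG z Gz.
  have [q qr] := radius_small (divr_gt0 r0 (ltr0n R 4)).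
  have [i hi] := DX_dense z.1 _ (radius_gt0 q).
  have [j hj] := DY_dense z.2 _ (radius_gt0 q).
  exists (i, j, q) => //; case: pselect => [_|[]]; first by split.
  move=> w [/= w1 w2]; apply: zrG; rewrite /sum_dist.
  have := metric_triangle mX z.1 (DX i) w.1.
  have := metric_triangle mY z.2 (DY j) w.2.
  rewrite (metric_sym mX z.1 (DX i)) (metric_sym mY z.2 (DY j)).
  by move: w1 w2 hi hj; rewrite /mball /=; lra.
apply: countable_bigcupT_measurable; first exact: countableP.
move=> ijq; case: pselect => // _.
apply: measurableX.
  exact: (measurable_mball mX bX).
exact: (measurable_mball mY bY).
Qed.

Lemma sum_dist_borel :
  @measurable _ (X * Y)%type =
  <<s [set A | metric_open (sum_dist distX distY) A] >>.
Proof.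
have [mX _ _ bX] := hX; have [mY _ _ bY] := hY.
apply/seteqP; split; last first.
  apply: smallest_sub; first exact: sigma_algebra_measurable.
  exact: measurable_open_sum_dist.
apply: smallest_sub; first exact: smallest_sigma_algebra.
move=> _ [[B mB <-]|[B mB <-]]; rewrite setTI.
- apply: borel_preimage; first exact: open_preimage_fst mY.
  by rewrite -bX.
- apply: borel_preimage; first exact: open_preimage_snd mX.
  by rewrite -bY.
Qed.

Lemma mm_space_sum_dist : mm_space (sum_dist distX distY).
Proof.
have [mX cX sX _] := hX; have [mY cY sY _] := hY.
split; [exact: sum_dist_metric|exact: sum_dist_complete|
  exact: sum_dist_separable|exact: sum_dist_borel].
Qed.

End sum_metric_borel.

Lemma measurable_fun_pair_in {d d1 d2} {T : measurableType d}
    {T1 : measurableType d1} {T2 : measurableType d2}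
    (D : set T) (f : T -> T1) (g : T -> T2) :
  measurable_fun D f -> measurable_fun D g ->
  measurable_fun D (fun x => (f x, g x)).
Proof.
move=> mf mg mD.
(* The product sigma-algebra is, by definition, generated by the preimages
   under [fst] and [snd]. *)
have := @measurability _ _ _ _ D (fun x => (f x, g x)) _ erefl.
apply => //.
move=> _ [_ [[A mA <-]|[B mB <-]] <-]; rewrite setTI; [exact: mf|exact: mg].
Qed.

Section ky_fan.
Context {R : realType}.

Lemma dKF_congr {Z W : Type} (mu : set Z -> \bar R) (nu : set W -> \bar R)
    (f1 g1 : Z -> R) (f2 g2 : W -> R) :
  (forall e : R, mu [set z | (e < `|f1 z - g1 z|)%R] =
                 nu [set w | (e < `|f2 w - g2 w|)%R]) ->
  dKF mu f1 g1 = dKF nu f2 g2.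
Proof.
move=> munu; rewrite /dKF; congr ereal_inf.
by apply/seteqP; split => _ [e [e0 he] <-]; exists e => //; split;
  rewrite // ?munu // -?munu.
Qed.

Lemma dH_KF_pullback_pair {Z X Y : Type} (mu : set Z -> \bar R)
    (nu : set (X * Y) -> \bar R) (a : Z -> X) (b : Z -> Y)
    (L1 : set (X -> R)) (L2 : set (Y -> R)) :
  (forall G1 G2, L1 G1 -> L2 G2 -> forall e : R,
     mu [set z | (e < `|G1 (a z) - G2 (b z)|)%R] =
     nu [set w | (e < `|G1 w.1 - G2 w.2|)%R]) ->
  dH_KF mu (pullback a L1) (pullback b L2) =
  dH_KF nu (pullback fst L1) (pullback snd L2).
Proof.
move=> munu; rewrite /dH_KF /pullback; congr Order.max; congr ereal_sup;
  rewrite !image_comp; apply: eq_imagel => G h /=;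
  congr ereal_inf; rewrite !image_comp; apply: eq_imagel => G' h' /=;
  exact: dKF_congr (munu _ _ _ _).
Qed.

End ky_fan.

Section parameters_and_couplings.
Context {R : realType} {dX dY : measure_display} {X : measurableType dX}
  {Y : measurableType dY} (mX : probability X R) (mY : probability Y R).

Lemma is_coupling_law01 (phi : R -> X) (psi : R -> Y)
    (hphi : is_parameter mX phi) (hpsi : is_parameter mY psi) :
  is_coupling mX mY (law01 (measurable_fun_pair_in hphi.1 hpsi.1)).
Proof.
split => [A mA|B mB].
- rewrite -(hphi.2 A mA); congr LI.
  by apply/seteqP; split => t /=; [case|].
- rewrite -(hpsi.2 B mB); congr LI.
  by apply/seteqP; split => t /=; [case|].
Qed.

Variables (P : probability (X * Y)%type R) (Phi : R -> X * Y).
Hypotheses (couplingP : is_coupling mX mY P) (hPhi : is_parameter P Phi).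

Lemma is_parameter_fst : is_parameter mX (fst \o Phi).
Proof.
split; first exact: measurableT_comp measurable_fst hPhi.1.
move=> A mA; rewrite -(couplingP.1 A mA) -(hPhi.2 _ (measurableX mA measurableT)).
by congr LI; apply/seteqP; split => t /=; [|case].
Qed.

Lemma is_parameter_snd : is_parameter mY (snd \o Phi).
Proof.
split; first exact: measurableT_comp measurable_snd hPhi.1.
move=> B mB; rewrite -(couplingP.2 B mB) -(hPhi.2 _ (measurableX measurableT mB)).
by congr LI; apply/seteqP; split => t /=; [|case].
Qed.

End parameters_and_couplings.

Theorem proposition5p5 (R : realType) (dX dY : measure_display)
    (X : measurableType dX) (Y : measurableType dY)
    (distX : X -> X -> R) (distY : Y -> Y -> R)
    (mX : probability X R) (mY : probability Y R) :
  mm_space distX -> mm_space distY ->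
  dconc distX distY mX mY =
  ereal_inf [set dconc_pi distX distY P |
               P in [set P : probability (X * Y)%type R | is_coupling mX mY P]].
Proof.
move=> hX hY; rewrite /dconc; congr ereal_inf; apply/seteqP; split.
- move=> _ [phi [psi [hphi hpsi ->]]].
  exists (law01 (measurable_fun_pair_in hphi.1 hpsi.1) : probability _ R).
    exact: is_coupling_law01.
  by rewrite /dconc_pi; symmetry; apply: dH_KF_pullback_pair.
- move=> _ [P couplingP <-].
  have [Phi hPhi] := exists_parameter P (mm_space_sum_dist hX hY).
  exists (fst \o Phi), (snd \o Phi); split.
  + exact: is_parameter_fst couplingP hPhi.
  + exact: is_parameter_snd couplingP hPhi.
  + rewrite /dconc_pi; symmetry; apply: dH_KF_pullback_pair => G1 G2 h1 h2 e.
    apply: hPhi.2; rewrite (sum_dist_borel hX hY); apply: sub_sigma_algebra.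
    exact: open_Lip1_gap.
Qed.
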